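(* Let $\mathsf P_1,\mathsf P_2\subseteq\mathcal G_{s,t}\times\mathbb N$ be parameterized problems with $\mathsf P_1\le_{\mathrm{LOCAL}}$ Multicolored Independent Set and $\mathsf P_2\le_{\mathrm{LOCAL}}$ Multicolored Independent Set. Then $\mathsf P_1\cup\mathsf P_2\le_{\mathrm{LOCAL}}$ Multicolored Independent Set.
   Context: LOCAL model: network = finite connected undirected graph $G$, $n=|V(G)|$, unique $O(\log n)$-bit identifiers; nodes initially know their identifier, neighbours' identifiers, input labels and the parameter; synchronous rounds, unbounded messages to neighbours, arbitrary local computation. $\mathcal G_{s,t}$: finite connected graphs with unary predicates $P_1..P_s$ and binary predicates $E_1..E_t$; a parameterized problem is $\mathsf P\subseteq\mathcal G_{s,t}\times\mathbb N$. LOCAL reductions: a LOCAL algorithm turning $(G,k)$ into $(G',k')$ ($G'$ connected), represented by $\nu:V(G')\to V(G)$ and $\eta$ mapping each $\{x,y\}\in E(G')$ to a path of $G$ between $\nu(x),\nu(y)$ (stored at the nodes; all nodes know $k'$). $\mathsf P\le_{\mathrm{LOCAL}}\mathsf Q$ if for computable $s,r,t,p$ there is such a reduction with $|V(G')|\le|V(G)|^{s(k)}$, all paths of length $\le r(k)$, $\le t(k)$ rounds, $k'\le p(k)$, and $(G,k)\in\mathsf P\iff(G',k')\in\mathsf Q$ (congestion unbounded). Multicolored Independent Set: instance $k\ge1$ and $G\in\mathcal G_{k,1}$ (binary predicate = edge relation), each vertex in at most one of $P_1..P_k$ (vertices may be uncoloured); yes iff there are pairwise non-adjacent $v_1\in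 P_1,..,v_k\in P_k$; parameter $k$. *)

From mathcomp Require Import all_boot.
From Stdlib Require List.
Set Implicit Arguments. Unset Strict Implicit. Unset Printing Implicit Defensive.

(* Computable functions nat -> nat: Kleene's partial recursive (mu-recursive)
   functions, with a big-step evaluation relation. *)
Inductive PRcode : Type :=
| PRzero : PRcode
| PRsucc : PRcode
| PRproj : nat -> PRcode
| PRcomp : PRcode -> list PRcode -> PRcode
| PRprec : PRcode -> PRcode -> PRcode
| PRmin  : PRcode -> PRcode.

Inductive PReval : PRcode -> list nat -> nat -> Prop :=
| PRe_zero v : PReval PRzero v 0
| PRe_succ x v : PReval PRsucc (x :: v) x.+1
| PRe_proj i v : i < size v -> PReval (PRproj i) v (nth 0 v i)
| PRe_comp f gs v ys y :
    PRevals gs v ys -> PReval f ys y -> PReval (PRcomp f gs) v y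
| PRe_prec0 f g v y : PReval f v y -> PReval (PRprec f g) (0 :: v) y
| PRe_precS f g n v r y :
    PReval (PRprec f g) (n :: v) r -> PReval g (n :: r :: v) y ->
    PReval (PRprec f g) (n.+1 :: v) y
| PRe_min f v n :
    PReval f (n :: v) 0 ->
    (forall m, m < n -> exists y, PReval f (m :: v) y.+1) ->
    PReval (PRmin f) v n
with PRevals : list PRcode -> list nat -> list nat -> Prop :=
| PRes_nil v : PRevals nil v nil
| PRes_cons g gs v y ys :
    PReval g v y -> PRevals gs v ys -> PRevals (g :: gs) v (y :: ys).

Definition computable (f : nat -> nat) : Prop :=
  exists c : PRcode, forall n, PReval c [:: n] (f n).

(* Structures of G_{s,t}: a graph (vertex set, edge relation) with unary
   predicates P_1..P_s and binary predicates E_1..E_t. *)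
Record inst (s t : nat) := Inst {
  gV : finType;
  gadj : rel gV;
  gP : 'I_s -> pred gV;
  gE : 'I_t -> rel gV
}.
Arguments gV {s t} _.
Arguments gadj {s t} _ _ _.
Arguments gP {s t} _ _ _.
Arguments gE {s t} _ _ _ _.

Definition wf_inst s t (G : inst s t) : Prop :=
  [/\ 0 < #|gV G|,
      symmetric (gadj G),
      irreflexive (gadj G),
      (forall x y : gV G, connect (gadj G) x y) &
      (forall (j : 'I_t) (x y : gV G), gE G j x y -> gadj G x y)].

Definition problem (s t : nat) := inst s t -> nat -> Prop.

Definition union_problem s t (P1 P2 : problem s t) : problem s t :=
  fun G k => P1 G k \/ P2 G k.

Definition MIS (s : nat) (G : inst s 1) (k : nat) : Prop :=
  [/\ s = k, 1 <= k,
      (forall x : gV G, forall i j : 'I_s, gP G i x -> gP G j x -> i = j),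
      (forall x y : gV G, gE G ord0 x y = gadj G x y) &
      exists f : 'I_s -> gV G,
        (forall i, gP G i (f i)) /\
        (forall i j, i != j -> ~~ gadj G (f i) (f j))].

(* Output of a node of a reduction to MIS:
   - o_k     : the new parameter k'
   - o_m     : number of vertices of G' hosted at this node (nu^{-1}(v)),
               named locally 0 .. o_m - 1
   - o_col   : colour (index of the unary predicate, if any) of hosted vertex a
   - o_edges : edges of G' stored at this node, each with its path eta. *)
Record entry := Entry {
  e_src : nat;        (* local index a of the endpoint hosted here *)
  e_tid : nat;        (* identifier of the node hosting the other endpoint *)
  e_tidx : nat;       (* local index b of the other endpoint at that node *)
  e_path : seq nat    (* identifiers of the nodes of the G-path after this node *)
}.

Record routput := ROutput {
  o_k : nat;
  o_m : nat;
  o_col : nat -> option nat;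
  o_edges : seq entry
}.

(* A LOCAL algorithm (for input structures in G_{s,t}): arbitrary state type,
   arbitrary local computation, and in each synchronous round every node sends
   its whole state (unbounded messages) to its neighbours; received messages are
   indexed by the sender's identifier. *)
Record algo (s t : nat) := Algo {
  St : Type;
  (* own id, neighbours' ids, own unary labels, binary labels E_j(v,w) and
     E_j(w,v) towards neighbour w (by id), parameter k *)
  a_init : nat -> (nat -> bool) -> ('I_s -> bool) ->
           ('I_t -> nat -> bool) -> ('I_t -> nat -> bool) -> nat -> St;
  a_step : St -> (nat -> option St) -> St;
  a_out : St -> routput
}.
Arguments St {s t} _.
Arguments a_init {s t} _ _ _ _ _ _ _.
Arguments a_step {s t} _ _ _.
Arguments a_out {s t} _ _.

Section Run.
Variables (s t : nat) (A : algo s t) (G : inst s t) (id : gV G -> nat) (k : nat).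

Definition init_state (v : gV G) : St A :=
  a_init A (id v)
    (fun i => [exists w, gadj G v w && (id w == i)])
    (fun j => gP G j v)
    (fun j i => [exists w, [&& gadj G v w, id w == i & gE G j v w]])
    (fun j i => [exists w, [&& gadj G v w, id w == i & gE G j w v]])
    k.

Fixpoint run (r : nat) : gV G -> St A :=
  match r with
  | 0 => init_state
  | r'.+1 => fun v =>
      a_step A (run r' v)
        (fun i => if [pick w | gadj G v w && (id w == i)] is Some w
                  then Some (run r' w) else None)
  end.
End Run.
Arguments init_state {s t} A G id k v.
Arguments run {s t} A G id k r _.

(* The graph G' defined by the outputs: V(G') = { (v,a) | a < o_m v },
   nu (v,a) = v; {x,y} in E(G') iff an entry for it is stored at nu x or nu y. *)
Section Target.
Variables (s t : nat) (G : inst s t) (id : gV G -> nat) (o : gV G -> routput).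

Definition tV : finType := {v : gV G & 'I_(o_m (o v))}.

Definition entry_for (x y : tV) (e : entry) : bool :=
  [&& e_src e == val (tagged x), e_tid e == id (tag y) & e_tidx e == val (tagged y)].

Definition tadj : rel tV :=
  fun x y => has (entry_for x y) (o_edges (o (tag x)))
          || has (entry_for y x) (o_edges (o (tag y))).

Definition target (k' : nat) : inst k' 1 :=
  @Inst k' 1 tV tadj
    (fun i x => o_col (o (tag x)) (val (tagged x)) == Some (val i))
    (fun _ => tadj).

Definition entry_valid (r : nat) (v : gV G) (e : entry) : Prop :=
  e_src e < o_m (o v) /\
  exists w : gV G,
    [/\ id w = e_tid e, e_tidx e < o_m (o w) &
        exists ps : seq (gV G),
          [/\ map id ps = e_path e, path (gadj G) v ps, last v ps = w &
              size ps <= r]].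
End Target.
Arguments tV {s t} G o.
Arguments entry_for {s t} G id o x y e.
Arguments tadj {s t} G id o x y.
Arguments target {s t} G id o k'.
Arguments entry_valid {s t} G id o r v e.

(* P <=_LOCAL MIS, for identifiers of O(log n) bits, i.e. unique identifiers
   in [0, n^c) for the fixed model constant c. *)
Definition local_reduces_to_MIS (c s t : nat) (P : problem s t) : Prop :=
  exists fs fr ft fp : nat -> nat,
  [/\ computable fs, computable fr, computable ft, computable fp &
  exists A : algo s t,
  forall (G : inst s t) (k : nat) (id : gV G -> nat),
    wf_inst G -> injective id -> (forall v, id v < #|gV G| ^ c) ->
    let o := fun v => a_out A (run A G id k (ft k) v) in
    exists k' : nat,
      [/\ (forall v, o_k (o v) = k'),
          1 <= k' <= fp k,
          (forall v a i, a < o_m (o v) -> o_col (o v) a = Some i -> i < k'),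
          (forall v e, List.In e (o_edges (o v)) -> entry_valid G id o (fr k) v e) &
       [/\ wf_inst (target G id o k'),
          #|tV G o| <= #|gV G| ^ fs k &
          (P G k <-> MIS (target G id o k') k')]]].

(* Given reductions A1 (parameter k1) and A2 (parameter k2), the nodes run
   both side by side and combine their two outputs locally.  On a network
   with at least two nodes the combined target is an OR-composition of the two
   MIS instances G1, G2 with k1 * k2 colours (i, j): every vertex x of G1
   with colour i is copied k2 times, copy j getting colour (i, j); every
   vertex y of G2 with colour j is copied k1 times, copy i getting colour
   (i, j); copies are adjacent when their originals are.  A solution of G1
   (resp. G2) copies to a solution of the product; conversely, in a solution
   of the product either each i has some colour (i, j) served by a copy from
   G1, and these give a solution of G1, or some i has all (i, j) served by
   copies from G2, which give a solution of G2.  An uncoloured hub vertex per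
   node, linked to the local copies and to the neighbouring hubs, keeps the
   target connected.  A one-node network must produce a one-vertex target,
   so there the node decides the union itself. *)
From HB Require Import structures.
From Stdlib Require Import ClassicalEpsilon FunctionalExtensionality.
From mathcomp Require Import all_boot zify.
Set Implicit Arguments. Unset Strict Implicit. Unset Printing Implicit Defensive.

Definition add_code : PRcode := PRprec (PRproj 0) (PRcomp PRsucc [:: PRproj 1]).
Definition mul_code : PRcode := PRprec PRzero (PRcomp add_code [:: PRproj 1; PRproj 2]).

Lemma add_codeP n m : PReval add_code [:: n; m] (n + m).
Proof.
elim: n => [|n IH]; first exact/PRe_prec0/(@PRe_proj 0 [:: m]).
apply: (PRe_precS IH); apply: (@PRe_comp _ _ _ [:: n + m]); last exact: PRe_succ.
exact/PRes_cons/PRes_nil/(@PRe_proj 1 [:: n; n + m; m]).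
Qed.

Lemma mul_codeP n m : PReval mul_code [:: n; m] (n * m).
Proof.
elim: n => [|n IH]; first exact/PRe_prec0/PRe_zero.
apply: (PRe_precS IH); apply: (@PRe_comp _ _ _ [:: n * m; m]).
  apply/PRes_cons; first exact: (@PRe_proj 1 [:: n; n * m; m]).
  exact/PRes_cons/PRes_nil/(@PRe_proj 2 [:: n; n * m; m]).
by rewrite mulSn addnC; exact: add_codeP.
Qed.

Lemma computable_const c : computable (fun=> c).
Proof.
elim: c => [|c [cc Hc]]; first by exists PRzero => n; apply: PRe_zero.
exists (PRcomp PRsucc [:: cc]) => n; apply: (@PRe_comp _ _ _ [:: c]).
  exact/PRes_cons/PRes_nil.
exact: PRe_succ.
Qed.

Lemma computable_binop (op : nat -> nat -> nat) (c : PRcode) f g :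
  (forall n m, PReval c [:: n; m] (op n m)) ->
  computable f -> computable g -> computable (fun n => op (f n) (g n)).
Proof.
move=> Hc [cf Hf] [cg Hg]; exists (PRcomp c [:: cf; cg]) => n.
apply: (@PRe_comp _ _ _ [:: f n; g n]); last exact: Hc.
exact/PRes_cons/PRes_cons/PRes_nil.
Qed.

Lemma computable_add f g : computable f -> computable g -> computable (fun n => f n + g n).
Proof. exact: computable_binop add_codeP. Qed.

Lemma computable_mul f g : computable f -> computable g -> computable (fun n => f n * g n).
Proof. exact: computable_binop mul_codeP. Qed.

Definition entry_tuple (e : entry) := (e_src e, e_tid e, e_tidx e, e_path e).
Definition tuple_entry (p : nat * nat * nat * seq nat) :=
  let: (a, b, c, d) := p in Entry a b c d.
Lemma entry_tupleK : cancel entry_tuple tuple_entry. Proof. by case. Qed.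
HB.instance Definition _ := Equality.copy entry (can_type entry_tupleK).

Lemma InP (T : eqType) (x : T) s : List.In x s <-> x \in s.
Proof.
elim: s => [|y s IH] //=; rewrite in_cons; split.
- by case=> [->|/IH ->]; rewrite ?eqxx ?orbT.
- by case/orP=> [/eqP->|/IH]; [left|right].
Qed.

(* A node only receives the identifiers of its neighbours as a predicate; to
   emit one edge per neighbour it turns it into a list, chosen classically
   among the lists enumerating the predicate (when there is one). *)
Definition pred_list (f : nat -> bool) : seq nat :=
  match excluded_middle_informative (exists s : seq nat, forall i, f i = (i \in s)) with
  | left H => proj1_sig (constructive_indefinite_description _ H)
  | right _ => [::]
  end.

Lemma pred_listP f (s : seq nat) :
  (forall i, f i = (i \in s)) -> forall i, (i \in pred_list f) = f i.
Proof.
move=> Hs i; rewrite /pred_list; case: excluded_middle_informative => [H|[]]; last by exists s.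
by case: constructive_indefinite_description => s' /= ->.
Qed.

(* Running two LOCAL algorithms side by side: the state holds the initial
   knowledge of the node, a round counter and the two component states; each
   component is stepped only during its own number of rounds, and at the end
   a combiner [comb] merges the two outputs, knowing the node's identifier and
   the list of its neighbours' identifiers. *)
Section Parallel.
Variables (s t : nat) (A1 A2 : algo s t) (ft1 ft2 : nat -> nat)
  (comb : nat -> seq nat -> routput -> routput -> routput).

Record par_state := ParState {
  p_id : nat; p_nb : seq nat; p_k : nat; p_round : nat;
  p_st1 : St A1; p_st2 : St A2 }.

Definition par_algo : algo s t :=
  @Algo s t par_state
    (fun idv nb lp le1 le2 k =>
       ParState idv (pred_list nb) k 0
         (a_init A1 idv nb lp le1 le2 k) (a_init A2 idv nb lp le1 le2 k))
    (fun st msg =>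
       ParState (p_id st) (p_nb st) (p_k st) (p_round st).+1
         (if p_round st < ft1 (p_k st)
          then a_step A1 (p_st1 st) (fun i => omap p_st1 (msg i)) else p_st1 st)
         (if p_round st < ft2 (p_k st)
          then a_step A2 (p_st2 st) (fun i => omap p_st2 (msg i)) else p_st2 st))
    (fun st => comb (p_id st) (p_nb st) (a_out A1 (p_st1 st)) (a_out A2 (p_st2 st))).

Variables (G : inst s t) (id : gV G -> nat) (k : nat).

Definition nbr (v : gV G) (i : nat) : bool := [exists w, gadj G v w && (id w == i)].

Lemma run_par_algo r v :
  [/\ p_id (run par_algo G id k r v) = id v,
      p_nb (run par_algo G id k r v) = pred_list (nbr v),
      p_k (run par_algo G id k r v) = k, p_round (run par_algo G id k r v) = r &
      p_st1 (run par_algo G id k r v) = run A1 G id k (minn r (ft1 k)) v /\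
      p_st2 (run par_algo G id k r v) = run A2 G id k (minn r (ft2 k)) v].
Proof.
elim: r v => [|r IH] v; first by rewrite !min0n.
rewrite /=; case: (IH v) => -> -> -> -> [-> ->]; split => //; split.
- case: ltnP => Hr; last by rewrite (minn_idPr (leqW Hr)).
  rewrite (minn_idPl Hr) /=; congr (a_step A1 _ _).
  apply: functional_extensionality => i; case: pickP => [w _|_] //=.
  by case: (IH w) => _ _ _ _ [-> _]; rewrite (minn_idPl (ltnW Hr)).
- case: ltnP => Hr; last by rewrite (minn_idPr (leqW Hr)).
  rewrite (minn_idPl Hr) /=; congr (a_step A2 _ _).
  apply: functional_extensionality => i; case: pickP => [w _|_] //=.
  by case: (IH w) => _ _ _ _ [_ ->]; rewrite (minn_idPl (ltnW Hr)).
Qed.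

Lemma out_par_algo v :
  a_out par_algo (run par_algo G id k (ft1 k + ft2 k) v) =
  comb (id v) (pred_list (nbr v)) (a_out A1 (run A1 G id k (ft1 k) v))
       (a_out A2 (run A2 G id k (ft2 k) v)).
Proof.
case: (run_par_algo (ft1 k + ft2 k) v) => /= -> -> _ _ [-> ->].
by rewrite (minn_idPr (leq_addr _ _)) (minn_idPr (leq_addl _ _)).
Qed.
End Parallel.
Arguments nbr {s t} G id v i.

Lemma divmod_inj k q r q' r' :
  r < k -> r' < k -> q * k + r = q' * k + r' -> q = q' /\ r = r'.
Proof.
move=> hr hr' E.
have Er : r = r' by rewrite -(modn_small hr) -(modn_small hr') -(modnMDl q) E modnMDl.
split=> //; subst r'; move/eqP: E; rewrite eqn_add2r eqn_mul2r.
by case: k hr {hr'} => // k _ /eqP.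
Qed.

(* The local vertex indices of the combined output: 0 is a hub vertex; copy
   number [j] of the local vertex [a] of the first output sits at the odd index
   [slot1 L a j], copy number [i] of the local vertex [b] of the second output
   at the even index [slot2 L b i]; [L] bounds the copy numbers. *)
Definition slot1 L a j := (a * L + j).*2.+1.
Definition slot2 L b i := (b * L + i).*2.+2.

Lemma slot1_inj L a j a' j' :
  j < L -> j' < L -> slot1 L a j = slot1 L a' j' -> a = a' /\ j = j'.
Proof. by move=> hj hj' [/double_inj]; apply: divmod_inj. Qed.

Lemma slot2_inj L a j a' j' :
  j < L -> j' < L -> slot2 L a j = slot2 L a' j' -> a = a' /\ j = j'.
Proof. by move=> hj hj' [/double_inj]; apply: divmod_inj. Qed.

Lemma slot1_neq2 L a j b i : slot1 L a j != slot2 L b i.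
Proof. by rewrite /slot1 /slot2 eqSS; apply/negP => /eqP/(congr1 odd); rewrite /= !odd_double. Qed.

Lemma slot_decode L x : 0 < L -> 0 < x ->
  (exists a j, j < L /\ x = slot1 L a j) \/ (exists b i, i < L /\ x = slot2 L b i).
Proof.
move=> L0; case: x => // y _.
have := odd_double_half y; rewrite (divn_eq y./2 L).
have : y./2 %% L < L by rewrite ltn_mod.
move: (y./2 %/ L) (y./2 %% L) => a j hj.
by case: (odd y) => /= <-; [right | left]; exists a, j.
Qed.

Lemma slot1_bound L a j m1 m2 : a < m1 -> j < L -> slot1 L a j <= ((m1 + m2) * L).*2.
Proof. rewrite /slot1 -!muln2 => h1 h2; nia. Qed.

Lemma slot2_bound L b i m1 m2 : b < m2 -> i < L -> slot2 L b i <= ((m1 + m2) * L).*2.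
Proof. rewrite /slot2 -!muln2 => h1 h2; nia. Qed.

(* For outputs [d1], [d2]
   with parameters [k1], [k2], colour [(i, j)] of the product is encoded as
   [i * k2 + j]; a copy [j < k2] of a vertex of colour [i] of the first output
   gets colour [(i, j)], a copy [i < k1] of a vertex of colour [j] of the
   second output gets colour [(i, j)], and the hub is uncoloured. *)
Definition copy_bound (d1 d2 : routput) := o_k d1 + o_k d2.
Definition comb_size (d1 d2 : routput) := ((o_m d1 + o_m d2) * copy_bound d1 d2).*2.

Definition comb_col (d1 d2 : routput) (x : nat) : option nat :=
  let a := x.-1./2 %/ copy_bound d1 d2 in let j := x.-1./2 %% copy_bound d1 d2 in
  if x == 0 then None
  else if odd x then
    if (a < o_m d1) && (j < o_k d2) then omap (fun i => i * o_k d2 + j) (o_col d1 a) else None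
  else
    if (a < o_m d2) && (j < o_k d1) then omap (fun j' => j * o_k d2 + j') (o_col d2 a) else None.

Lemma comb_col_slot1 d1 d2 a j : j < copy_bound d1 d2 ->
  comb_col d1 d2 (slot1 (copy_bound d1 d2) a j) =
  if (a < o_m d1) && (j < o_k d2) then omap (fun i => i * o_k d2 + j) (o_col d1 a) else None.
Proof.
move=> hj; have L0 : 0 < copy_bound d1 d2 by apply: leq_ltn_trans hj.
rewrite /comb_col /slot1 /= odd_double half_double.
by rewrite divnMDl // divn_small // addn0 modnMDl modn_small.
Qed.

Lemma comb_col_slot2 d1 d2 b i : i < copy_bound d1 d2 ->
  comb_col d1 d2 (slot2 (copy_bound d1 d2) b i) =
  if (b < o_m d2) && (i < o_k d1) then omap (fun j => i * o_k d2 + j) (o_col d2 b) else None.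
Proof.
move=> hi; have L0 : 0 < copy_bound d1 d2 by apply: leq_ltn_trans hi.
rewrite /comb_col /slot2 /= odd_double uphalf_double.
by rewrite divnMDl // divn_small // addn0 modnMDl modn_small.
Qed.

Definition has_entry (E : seq entry) (X U Y : nat) : bool :=
  has (fun e => [&& e_src e == X, e_tid e == U & e_tidx e == Y]) E.

Lemma has_entry_cat E1 E2 X U Y :
  has_entry (E1 ++ E2) X U Y = has_entry E1 X U Y || has_entry E2 X U Y.
Proof. exact: has_cat. Qed.

Definition copy_entry (enc : nat -> nat -> nat) (e : entry) (j j' : nat) : entry :=
  Entry (enc (e_src e) j) (e_tid e) (enc (e_tidx e) j') (e_path e).

Definition copies (enc : nat -> nat -> nat) (k : nat) (E : seq entry) : seq entry :=
  flatten [seq [seq copy_entry enc e j j' | j <- iota 0 k, j' <- iota 0 k] | e <- E].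

Lemma mem_copies enc k E e' : e' \in copies enc k E <->
  exists e j j', [/\ e \in E, j < k, j' < k & e' = copy_entry enc e j j'].
Proof.
split.
- case/flatten_mapP => e he /allpairsP [[j j'] /= [hj hj' ->]].
  by exists e, j, j'; move: hj hj'; rewrite !mem_iota.
- case=> e [j [j' [he hj hj' ->]]]; apply/flatten_mapP; exists e => //.
  by apply/allpairsP; exists (j, j'); rewrite !mem_iota.
Qed.

Lemma has_entry_copies_out enc k E X U Y :
  (forall a j, enc a j != X) -> has_entry (copies enc k E) X U Y = false.
Proof.
move=> hX; apply/hasP => [[e' /mem_copies [e [j [j' [_ _ _ ->]]]]]].
by rewrite /= (negbTE (hX _ _)).
Qed.

Section Copies.
Variables (enc : nat -> nat -> nat) (k : nat).
Hypothesis enc_inj :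
  forall a j a' j', j < k -> j' < k -> enc a j = enc a' j' -> a = a' /\ j = j'.

Lemma has_entry_copies E a j U a' j' : j < k -> j' < k ->
  has_entry (copies enc k E) (enc a j) U (enc a' j') = has_entry E a U a'.
Proof.
move=> hj hj'; apply/hasP/hasP.
- case=> _ /mem_copies [e [i [i' [he hi hi' ->]]]] /and3P [/eqP E1 /eqP E2 /eqP E3].
  case: (enc_inj hi hj E1) (enc_inj hi' hj' E3) => <- _ [<- _].
  by exists e => //; rewrite E2 !eqxx.
- case=> e he /and3P [/eqP E1 /eqP E2 /eqP E3]; exists (copy_entry enc e j j').
    by apply/mem_copies; exists e, j, j'.
  by rewrite /= E1 E2 E3 !eqxx.
Qed.

Lemma has_entry_copies_loop E X U :
  has_entry (copies enc k E) X U X -> exists a, has_entry E a U a.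
Proof.
case/hasP => _ /mem_copies [e [j [j' [he hj hj' ->]]]] /and3P [/eqP <- /eqP E2 /eqP E3].
case: (enc_inj hj' hj E3) => E4 _.
by exists (e_src e); apply/hasP; exists e => //; rewrite E2 E4 !eqxx.
Qed.
End Copies.

Definition hub_edges (idv : nat) (nb : seq nat) (m : nat) : seq entry :=
  [seq Entry 0 u 0 [:: u] | u <- nb] ++ [seq Entry 0 idv x [::] | x <- iota 1 m].

Lemma mem_hub_edges idv nb m e : e \in hub_edges idv nb m ->
  (exists2 u, u \in nb & e = Entry 0 u 0 [:: u]) \/
  (exists2 x, 0 < x <= m & e = Entry 0 idv x [::]).
Proof.
rewrite mem_cat => /orP [] /mapP [x hx ->]; [left | right]; exists x => //.
by move: hx; rewrite mem_iota; lia.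
Qed.

Lemma has_entry_hub_out idv nb m X U Y : X != 0 -> has_entry (hub_edges idv nb m) X U Y = false.
Proof.
move=> hX; apply/hasP => [[e]]; rewrite mem_cat => /orP [] /mapP [? _ ->] /=;
  by rewrite eq_sym (negbTE hX).
Qed.

Lemma has_entry_hub_loop idv nb m X : has_entry (hub_edges idv nb m) X idv X -> idv \in nb.
Proof.
case/hasP => e; rewrite mem_cat => /orP [] /mapP [x hx ->] /and3P [/eqP <- /= /eqP hid /eqP hx0].
  by rewrite -hid.
by move: hx; rewrite hx0 mem_iota.
Qed.

Lemma has_entry_hub_local idv nb m x : 0 < x <= m -> has_entry (hub_edges idv nb m) 0 idv x.
Proof.
move=> hx; apply/hasP; exists (Entry 0 idv x [::]); last by rewrite /= !eqxx.
by rewrite mem_cat; apply/orP; right; apply/mapP; exists x; rewrite // mem_iota; lia.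
Qed.

Lemma has_entry_hub_nbr idv nb m u : u \in nb -> has_entry (hub_edges idv nb m) 0 u 0.
Proof.
move=> hu; apply/hasP; exists (Entry 0 u 0 [:: u]); last by rewrite /= !eqxx.
by rewrite mem_cat; apply/orP; left; apply/mapP; exists u.
Qed.

Definition comb_edges idv nb (d1 d2 : routput) : seq entry :=
  hub_edges idv nb (comb_size d1 d2) ++
  copies (slot1 (copy_bound d1 d2)) (o_k d2) (o_edges d1) ++
  copies (slot2 (copy_bound d1 d2)) (o_k d1) (o_edges d2).

(* On a one-node network an output with a single vertex is a yes-instance of
   Multicolored Independent Set exactly when it is [accepts_alone]. *)
Definition accepts_alone (d : routput) : bool := (o_k d == 1) && (o_col d 0 == Some 0).

(* The combiner: a node without neighbours (the network has one node) decides
   the union itself; otherwise it builds its part of the product instance. *)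
Definition comb idv (nb : seq nat) (d1 d2 : routput) : routput :=
  if nb == [::] then
    ROutput 1 1 (fun=> if accepts_alone d1 || accepts_alone d2 then Some 0 else None) [::]
  else ROutput (o_k d1 * o_k d2) (comb_size d1 d2).+1 (comb_col d1 d2) (comb_edges idv nb d1 d2).

Definition correct_output s t (G : inst s t) (id : gV G -> nat) (o : gV G -> routput)
    (kmax r size : nat) (answer : Prop) : Prop :=
  exists k' : nat,
    [/\ (forall v, o_k (o v) = k'),
        1 <= k' <= kmax,
        (forall v a i, a < o_m (o v) -> o_col (o v) a = Some i -> i < k'),
        (forall v e, List.In e (o_edges (o v)) -> entry_valid G id o r v e) &
     [/\ wf_inst (target G id o k'),
        #|tV G o| <= size &
        (answer <-> MIS (target G id o k') k')]].
Arguments correct_output {s t} G id o kmax r size answer.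

Lemma correct_output_weaken s t (G : inst s t) id o kmax r size kmax' r' size' answer :
  kmax <= kmax' -> r <= r' -> size <= size' ->
  correct_output G id o kmax r size answer -> correct_output G id o kmax' r' size' answer.
Proof.
move=> hk hr hs [k' [Hk /andP [k'p k'le] Hc Hv [Hw Hcard HP]]]; exists k'; split=> //.
- by rewrite k'p (leq_trans k'le hk).
- move=> v e /(Hv v) [ha [w [hw hb [ps [P1 P2 P3 P4]]]]]; split=> //.
  by exists w; split=> //; exists ps; split=> //; exact: leq_trans P4 hr.
- by split=> //; exact: leq_trans Hcard hs.
Qed.

Section Targets.
Variables (s t : nat) (G : inst s t) (id : gV G -> nat).

Lemma tadjE (o : gV G -> routput) (x y : tV G o) :
  tadj G id o x y = has_entry (o_edges (o (tag x))) (tagged x) (id (tag y)) (tagged y)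
                 || has_entry (o_edges (o (tag y))) (tagged y) (id (tag x)) (tagged x).
Proof. by []. Qed.

Lemma MIS_target (o : gV G -> routput) k' :
  MIS (target G id o k') k' <->
  (1 <= k' /\ exists f : 'I_k' -> tV G o,
     (forall i, o_col (o (tag (f i))) (tagged (f i)) == Some (val i)) /\
     (forall i j, i != j -> ~~ tadj G id o (f i) (f j))).
Proof.
split; first by case=> _ hk _ _ [f [h1 h2]]; split=> //; exists f.
case=> hk [f [h1 h2]]; split=> //; last by exists f.
by move=> x i j /= /eqP -> /eqP [] /val_inj.
Qed.

Lemma card_tV (o : gV G -> routput) : #|tV G o| = \sum_(v : gV G) o_m (o v).
Proof.
rewrite /tV card_tagged sumnE big_map big_enum /=.
by apply: eq_bigr => v _; rewrite card_ord.
Qed.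

Lemma nbr_list_mem v u : (u \in pred_list (nbr G id v)) = nbr G id v u.
Proof.
apply: (@pred_listP _ [seq id w | w <- enum (gadj G v)]) => i; apply/existsP/mapP.
- by case=> w /andP [hw /eqP <-]; exists w; rewrite ?mem_enum.
- by case=> w; rewrite mem_enum => hw ->; exists w; rewrite eqxx andbT.
Qed.

Lemma has_entry_no_loop (o : gV G -> routput) k' r v a :
  wf_inst (target G id o k') ->
  (forall v e, List.In e (o_edges (o v)) -> entry_valid G id o r v e) ->
  ~~ has_entry (o_edges (o v)) a (id v) a.
Proof.
case=> _ _ irr _ _ Hv; apply/hasP => [[e he /and3P [/eqP E1 /eqP E2 /eqP E3]]].
case: (Hv v e (proj2 (InP _ _) he)); rewrite E1 => ha _.
move: (irr (existT (fun v => 'I_(o_m (o v))) v (Ordinal ha))).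
by rewrite /= tadjE /= orbb => /hasP; apply; exists e; rewrite ?E1 ?E2 ?E3 ?eqxx.
Qed.

Hypothesis wfG : wf_inst G.

Lemma nbr_list_nil v : #|gV G| <= 1 -> pred_list (nbr G id v) = [::].
Proof.
case: wfG => _ _ irr _ _ /fintype_le1P hn.
case E: (pred_list _) => [//|u us]; have := nbr_list_mem v u.
by rewrite E mem_head => /esym/existsP [w /andP []]; rewrite -(hn v w) irr.
Qed.

Lemma nbr_list_cons v : 1 < #|gV G| -> pred_list (nbr G id v) != [::].
Proof.
case: wfG => _ _ _ conn _ hn.
have [w hw] : exists w, w != v.
  have : 0 < #|predC1 v| by rewrite cardC1; lia.
  by case/card_gt0P => w hw; exists w.
case/connectP: (conn v w) => [[|x p] /= hp E]; first by rewrite -E eqxx in hw.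
case/andP: hp => hx _; apply/eqP => E'; have := nbr_list_mem v (id x).
by rewrite E' in_nil => /esym/existsP; apply; exists x; rewrite hx eqxx.
Qed.
End Targets.

Definition union_output s t (G : inst s t) (id : gV G -> nat) (o1 o2 : gV G -> routput)
    (v : gV G) : routput :=
  comb (id v) (pred_list (nbr G id v)) (o1 v) (o2 v).
Arguments union_output {s t} G id o1 o2 v.

Section OneNode.
Variables (s t : nat) (G : inst s t) (id : gV G -> nat).
Hypotheses (wfG : wf_inst G) (n_le1 : #|gV G| <= 1).

Lemma accepts_aloneP (o : gV G -> routput) k' v : (forall v, o_k (o v) = k') ->
  wf_inst (target G id o k') -> #|tV G o| <= 1 ->
  MIS (target G id o k') k' <-> accepts_alone (o v).
Proof.
move=> Hk Hw /fintype_le1P Hx; have /fintype_le1P Hv := n_le1.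
rewrite MIS_target /accepts_alone Hk; split.
- case=> hk [f [hc _]].
  have k1 : k' = 1.
    case: k' f hc hk {Hk Hw} => [|[|k']] f hc hk //.
    move: (hc ord0) (hc (Ordinal (isT : 1 < k'.+2))).
    by rewrite (Hx (f ord0) (f (Ordinal (isT : 1 < k'.+2)))) => /eqP -> /eqP [].
  subst k'; rewrite eqxx /=; set x := f ord0.
  have h0 : 0 < o_m (o (tag x)) by apply: leq_ltn_trans (ltn_ord (tagged x)).
  have E0 := congr1 (fun y : tV G o => nat_of_ord (tagged y))
               (Hx x (existT (fun w => 'I_(o_m (o w))) (tag x) (Ordinal h0))).
  by move: (hc ord0); rewrite -/x /= -E0 /= -(Hv (tag x) v).
- case/andP => /eqP -> hc; split=> //.
  case: Hw => /card_gt0P [x0 _] _ _ _ _.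
  have h0 : 0 < o_m (o v) by rewrite (Hv (tag x0) v); apply: leq_ltn_trans (ltn_ord (tagged x0)).
  exists (fun _ => existT (fun w => 'I_(o_m (o w))) v (Ordinal h0)); split.
    by move=> i; rewrite (ord1 i).
  by move=> i j; rewrite (ord1 i) (ord1 j) eqxx.
Qed.

Variables (o1 o2 : gV G -> routput).
Local Notation oc := (union_output G id o1 o2).

Lemma union_output_alone v : oc v =
  ROutput 1 1 (fun=> if accepts_alone (o1 v) || accepts_alone (o2 v) then Some 0 else None) [::].
Proof. by rewrite /union_output /comb nbr_list_nil. Qed.

Lemma card_union_alone : #|tV G oc| = #|gV G|.
Proof. by rewrite card_tV -sum1_card; apply: eq_bigr => v _; rewrite union_output_alone. Qed.

Lemma union_correct_alone kmax1 r1 kmax2 r2 ans1 ans2 kmax r : 0 < kmax ->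
  correct_output G id o1 kmax1 r1 1 ans1 -> correct_output G id o2 kmax2 r2 1 ans2 ->
  correct_output G id oc kmax r 1 (ans1 \/ ans2).
Proof.
move=> kmax0 [k1 [Hk1 _ _ _ [Hw1 Hcard1 HP1]]] [k2 [Hk2 _ _ _ [Hw2 Hcard2 HP2]]].
have Hcard : #|tV G oc| <= 1 by rewrite card_union_alone.
have Hk v : o_k (oc v) = 1 by rewrite union_output_alone.
have Hw : wf_inst (target G id oc 1).
  have /fintype_le1P Hx := Hcard.
  have He v : o_edges (oc v) = [::] by rewrite union_output_alone.
  have Hadj x y : tadj G id oc x y = false by rewrite tadjE !He.
  split=> //; first by rewrite card_union_alone; case: wfG.
  - by move=> x y /=; rewrite !Hadj.
  - by move=> x /=; rewrite Hadj.
  - by move=> x y; rewrite (Hx x y) connect0.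
case: wfG => /card_gt0P [v0 _] _ _ _ _.
have HP : MIS (target G id oc 1) 1 <-> accepts_alone (o1 v0) || accepts_alone (o2 v0).
  rewrite (accepts_aloneP v0 Hk Hw Hcard) union_output_alone /accepts_alone /=.
  by case: (_ || _).
exists 1; split=> //.
- by move=> v a i; rewrite union_output_alone /=; case: (_ || _) => // _ [<-].
- by move=> v e; rewrite union_output_alone.
split=> //; rewrite HP.
have A1 := iff_trans HP1 (accepts_aloneP v0 Hk1 Hw1 Hcard1).
have A2 := iff_trans HP2 (accepts_aloneP v0 Hk2 Hw2 Hcard2).
split; first by case=> [/A1 -> | /A2 ->]; rewrite ?orbT.
by case/orP=> [/A1 | /A2]; [left | right].
Qed.
End OneNode.

Section Product.
Variables (s t : nat) (G : inst s t) (id : gV G -> nat) (o1 o2 : gV G -> routput)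
  (k1 k2 r1 r2 : nat).
Hypotheses (wfG : wf_inst G) (id_inj : injective id) (n_gt1 : 1 < #|gV G|)
  (Hk1 : forall v, o_k (o1 v) = k1) (k1_gt0 : 0 < k1)
  (Hc1 : forall v a i, a < o_m (o1 v) -> o_col (o1 v) a = Some i -> i < k1)
  (Hv1 : forall v e, List.In e (o_edges (o1 v)) -> entry_valid G id o1 r1 v e)
  (Hw1 : wf_inst (target G id o1 k1))
  (Hk2 : forall v, o_k (o2 v) = k2) (k2_gt0 : 0 < k2)
  (Hc2 : forall v a i, a < o_m (o2 v) -> o_col (o2 v) a = Some i -> i < k2)
  (Hv2 : forall v e, List.In e (o_edges (o2 v)) -> entry_valid G id o2 r2 v e)
  (Hw2 : wf_inst (target G id o2 k2)).

Local Notation oc := (union_output G id o1 o2).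
Local Notation L := (k1 + k2).

Lemma copy_bound_eq v : copy_bound (o1 v) (o2 v) = L.
Proof. by rewrite /copy_bound Hk1 Hk2. Qed.

(* Every node has a neighbour, so it outputs its part of the product. *)
Lemma union_output_product v : oc v =
  ROutput (k1 * k2) (((o_m (o1 v) + o_m (o2 v)) * L).*2).+1 (comb_col (o1 v) (o2 v))
    (hub_edges (id v) (pred_list (nbr G id v)) (((o_m (o1 v) + o_m (o2 v)) * L).*2) ++
     copies (slot1 L) k2 (o_edges (o1 v)) ++ copies (slot2 L) k1 (o_edges (o2 v))).
Proof.
rewrite /union_output /comb (negbTE (nbr_list_cons _ wfG _ n_gt1)) /comb_edges /comb_size.
by rewrite copy_bound_eq Hk1 Hk2.
Qed.

Lemma union_k v : o_k (oc v) = k1 * k2.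
Proof. by rewrite union_output_product. Qed.

Lemma union_m v : o_m (oc v) = (((o_m (o1 v) + o_m (o2 v)) * L).*2).+1.
Proof. by rewrite union_output_product. Qed.

Lemma union_col v : o_col (oc v) = comb_col (o1 v) (o2 v).
Proof. by rewrite union_output_product. Qed.

Lemma union_edges v : o_edges (oc v) =
  hub_edges (id v) (pred_list (nbr G id v)) (((o_m (o1 v) + o_m (o2 v)) * L).*2) ++
  copies (slot1 L) k2 (o_edges (o1 v)) ++ copies (slot2 L) k1 (o_edges (o2 v)).
Proof. by rewrite union_output_product. Qed.

Lemma slot1_inj_k2 a j a' j' : j < k2 -> j' < k2 -> slot1 L a j = slot1 L a' j' -> a = a' /\ j = j'.
Proof. by move=> hj hj'; apply: slot1_inj; apply: ltn_addl. Qed.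

Lemma slot2_inj_k1 a j a' j' : j < k1 -> j' < k1 -> slot2 L a j = slot2 L a' j' -> a = a' /\ j = j'.
Proof. by move=> hj hj'; apply: slot2_inj; apply: ltn_addr. Qed.

Lemma has_entry_slot1 v a j a' j' U : j < k2 -> j' < k2 ->
  has_entry (o_edges (oc v)) (slot1 L a j) U (slot1 L a' j') = has_entry (o_edges (o1 v)) a U a'.
Proof.
move=> hj hj'; rewrite union_edges.
rewrite has_entry_cat has_entry_hub_out // has_entry_cat (has_entry_copies slot1_inj_k2) //.
by rewrite (has_entry_copies_out (enc := slot2 L)) ?orbF // => ? ?; rewrite eq_sym slot1_neq2.
Qed.

Lemma has_entry_slot2 v a j a' j' U : j < k1 -> j' < k1 ->
  has_entry (o_edges (oc v)) (slot2 L a j) U (slot2 L a' j') = has_entry (o_edges (o2 v)) a U a'.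
Proof.
move=> hj hj'; rewrite union_edges.
rewrite has_entry_cat has_entry_hub_out // has_entry_cat (has_entry_copies slot2_inj_k1) //.
by rewrite (has_entry_copies_out (enc := slot1 L)) // => ? ?; rewrite slot1_neq2.
Qed.

Lemma tadj_slot1 (x y : tV G oc) (x1 y1 : tV G o1) j j' : j < k2 -> j' < k2 ->
  tag x = tag x1 -> tag y = tag y1 ->
  val (tagged x) = slot1 L (tagged x1) j -> val (tagged y) = slot1 L (tagged y1) j' ->
  tadj G id oc x y = tadj G id o1 x1 y1.
Proof. by move=> hj hj' Tx Ty Ex Ey; rewrite !tadjE Ex Ey Tx Ty !has_entry_slot1. Qed.

Lemma tadj_slot2 (x y : tV G oc) (x2 y2 : tV G o2) i i' : i < k1 -> i' < k1 ->
  tag x = tag x2 -> tag y = tag y2 ->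
  val (tagged x) = slot2 L (tagged x2) i -> val (tagged y) = slot2 L (tagged y2) i' ->
  tadj G id oc x y = tadj G id o2 x2 y2.
Proof. by move=> hi hi' Tx Ty Ex Ey; rewrite !tadjE Ex Ey Tx Ty !has_entry_slot2. Qed.

(* A loop of the product would be a loop of [G] or of one of the targets. *)
Lemma union_irreflexive : irreflexive (tadj G id oc).
Proof.
move=> [v X]; rewrite tadjE orbb /= union_edges.
rewrite has_entry_cat has_entry_cat; apply/negP => /orP [/has_entry_hub_loop|/orP []].
- rewrite nbr_list_mem => /existsP [w /andP [hw /eqP /id_inj E]].
  by move: hw; rewrite E; case: wfG => _ _ irr _ _; rewrite irr.
- case/(has_entry_copies_loop slot1_inj_k2) => a.
  by apply/negP; apply: has_entry_no_loop Hw1 Hv1.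
- case/(has_entry_copies_loop slot2_inj_k1) => a.
  by apply/negP; apply: has_entry_no_loop Hw2 Hv2.
Qed.

Lemma union_symmetric : symmetric (tadj G id oc).
Proof. by move=> x y; rewrite !tadjE orbC. Qed.

Lemma union_m_gt0 v : 0 < o_m (oc v).
Proof. by rewrite union_m. Qed.

Definition hub v : tV G oc := existT (fun v => 'I_(o_m (oc v))) v (Ordinal (union_m_gt0 v)).

Lemma hub_adj (x : tV G oc) : hub (tag x) = x \/ tadj G id oc (hub (tag x)) x.
Proof.
case: x => v X; case: (posnP X) => hX; first by left; congr existT; apply: val_inj.
right; rewrite tadjE /= union_edges has_entry_cat; apply/orP; left; apply/orP; left.
by apply: has_entry_hub_local; rewrite hX -ltnS -union_m ltn_ord.
Qed.

Lemma hub_hub_adj v w : gadj G v w -> tadj G id oc (hub v) (hub w).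
Proof.
move=> hvw; rewrite tadjE /= union_edges has_entry_cat; apply/orP; left; apply/orP; left.
by apply: has_entry_hub_nbr; rewrite nbr_list_mem; apply/existsP; exists w; rewrite hvw eqxx.
Qed.

Lemma union_connected (x y : tV G oc) : connect (tadj G id oc) x y.
Proof.
have hubs v w : connect (tadj G id oc) (hub v) (hub w).
  case: wfG => _ _ _ conn _; case/connectP: (conn v w) => p.
  elim: p v => [|u p IH] v /=; first by move=> _ ->.
  case/andP => hu hp hl; apply: connect_trans (IH u hp hl).
  exact/connect1/hub_hub_adj.
apply: (connect_trans _ (connect_trans (hubs (tag x) (tag y)) _)).
- case: (hub_adj x) => [->|h]; first exact: connect0.
  by apply: connect1; rewrite union_symmetric.
- by case: (hub_adj y) => [->|h]; [exact: connect0 | exact: connect1].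
Qed.

Lemma union_wf : wf_inst (target G id oc (k1 * k2)).
Proof.
split=> //; [| exact: union_symmetric | exact: union_irreflexive | exact: union_connected].
by case: wfG => /card_gt0P [v _] _ _ _ _; apply/card_gt0P; exists (hub v).
Qed.

Lemma union_colP v X c : o_col (oc v) X = Some c ->
  (exists a j i, [/\ X = slot1 L a j, a < o_m (o1 v), j < k2, o_col (o1 v) a = Some i
                   & c = i * k2 + j]) \/
  (exists b i j, [/\ X = slot2 L b i, b < o_m (o2 v), i < k1, o_col (o2 v) b = Some j
                   & c = i * k2 + j]).
Proof.
have L0 : 0 < L by rewrite addn_gt0 k1_gt0.
rewrite union_col; case: (posnP X) => [->|/(slot_decode L0)] //.
case=> [[a [j [hj ->]]] | [b [i [hi ->]]]].
- rewrite -(copy_bound_eq v) comb_col_slot1 ?copy_bound_eq // Hk2.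
  case: ifP => // /andP [ha hj2]; case E: (o_col (o1 v) a) => [i|] //= [<-].
  by left; exists a, j, i.
- rewrite -(copy_bound_eq v) comb_col_slot2 ?copy_bound_eq // Hk1 Hk2.
  case: ifP => // /andP [hb hi2]; case E: (o_col (o2 v) b) => [j|] //= [<-].
  by right; exists b, i, j.
Qed.

Lemma pair_code_lt i j : i < k1 -> j < k2 -> i * k2 + j < k1 * k2.
Proof. move=> hi hj; nia. Qed.

Lemma union_col_bound v a c : a < o_m (oc v) -> o_col (oc v) a = Some c -> c < k1 * k2.
Proof.
move=> _ /union_colP [[a' [j [i [_ ha hj hc ->]]]] | [b [i [j [_ hb hi hc ->]]]]].
- by apply: pair_code_lt => //; exact: Hc1 hc.
- by apply: pair_code_lt => //; exact: Hc2 hc.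
Qed.

Lemma slot1_in_range w a j : a < o_m (o1 w) -> j < k2 -> slot1 L a j < o_m (oc w).
Proof. by move=> ha hj; rewrite union_m ltnS slot1_bound // ltn_addl. Qed.

Lemma slot2_in_range w b i : b < o_m (o2 w) -> i < k1 -> slot2 L b i < o_m (oc w).
Proof. by move=> hb hi; rewrite union_m ltnS slot2_bound // ltn_addr. Qed.

(* Hub edges are routed along one edge of [G], copied edges along the path of
   the original edge. *)
Lemma union_valid v e : List.In e (o_edges (oc v)) -> entry_valid G id oc (r1 + r2).+1 v e.
Proof.
rewrite union_edges => /InP; rewrite mem_cat => /orP [/mem_hub_edges [] | ].
- case=> u; rewrite nbr_list_mem => /existsP [w /andP [hw /eqP <-]] ->.
  split; first exact: union_m_gt0.
  exists w; split=> //; first exact: union_m_gt0.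
  by exists [:: w]; rewrite /= hw.
- case=> x hx ->; split; first exact: union_m_gt0.
  exists v; split=> //; last by exists [::].
  by rewrite union_m ltnS; case/andP: hx.
rewrite mem_cat => /orP [] /mem_copies [e1 [j [j' [he1 hj hj' ->]]]].
- case: (Hv1 (proj2 (InP _ _) he1)) => ha [w [Ew hb [ps [P1 P2 P3 P4]]]].
  split; first exact: slot1_in_range.
  exists w; split=> //; first exact: slot1_in_range.
  by exists ps; split=> //; lia.
- case: (Hv2 (proj2 (InP _ _) he1)) => ha [w [Ew hb [ps [P1 P2 P3 P4]]]].
  split; first exact: slot2_in_range.
  exists w; split=> //; first exact: slot2_in_range.
  by exists ps; split=> //; lia.
Qed.

(* A solution [f1] of the first target yields one of the product: colour
   [(i, j)] is served by copy [j] of [f1 i]. *)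
Lemma union_MIS1 : MIS (target G id o1 k1) k1 -> MIS (target G id oc (k1 * k2)) (k1 * k2).
Proof.
move/MIS_target => [_ [f1 [hc1 hn1]]]; apply/MIS_target; split; first by rewrite muln_gt0 k1_gt0.
have hi (c : 'I_(k1 * k2)) : c %/ k2 < k1 by rewrite ltn_divLR // ltn_ord.
have hj (c : 'I_(k1 * k2)) : c %% k2 < k2 by rewrite ltn_pmod.
pose x1 c := f1 (Ordinal (hi c)).
pose x c := existT (fun v => 'I_(o_m (oc v))) (tag (x1 c))
              (Ordinal (slot1_in_range (ltn_ord (tagged (x1 c))) (hj c))).
exists x; split.
- move=> c /=; rewrite union_col -(copy_bound_eq (tag (x1 c))) comb_col_slot1; last first.
    by rewrite copy_bound_eq ltn_addl.
  rewrite Hk2 ltn_ord hj /=; move: (hc1 (Ordinal (hi c))) => /eqP; rewrite -/(x1 c) => -> /=.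
  by rewrite -divn_eq.
- move=> c c' hcc'; rewrite (@tadj_slot1 _ _ (x1 c) (x1 c') _ _ (hj c) (hj c')) //.
  case: (eqVneq (Ordinal (hi c)) (Ordinal (hi c'))) => E; last exact: hn1.
  by rewrite /x1 E; case: Hw1 => _ _ irr _ _; rewrite [tadj _ _ _ _ _]irr.
Qed.

(* A solution [f2] of the second target yields one of the product: colour
   [(i, j)] is served by copy [i] of [f2 j]. *)
Lemma union_MIS2 : MIS (target G id o2 k2) k2 -> MIS (target G id oc (k1 * k2)) (k1 * k2).
Proof.
move/MIS_target => [_ [f2 [hc2 hn2]]]; apply/MIS_target; split; first by rewrite muln_gt0 k1_gt0.
have hi (c : 'I_(k1 * k2)) : c %/ k2 < k1 by rewrite ltn_divLR // ltn_ord.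
have hj (c : 'I_(k1 * k2)) : c %% k2 < k2 by rewrite ltn_pmod.
pose x2 c := f2 (Ordinal (hj c)).
pose x c := existT (fun v => 'I_(o_m (oc v))) (tag (x2 c))
              (Ordinal (slot2_in_range (ltn_ord (tagged (x2 c))) (hi c))).
exists x; split.
- move=> c /=; rewrite union_col -(copy_bound_eq (tag (x2 c))) comb_col_slot2; last first.
    by rewrite copy_bound_eq ltn_addr.
  rewrite Hk1 Hk2 ltn_ord hi /=; move: (hc2 (Ordinal (hj c))) => /eqP; rewrite -/(x2 c) => -> /=.
  by rewrite -divn_eq.
- move=> c c' hcc'; rewrite (@tadj_slot2 _ _ (x2 c) (x2 c') _ _ (hi c) (hi c')) //.
  case: (eqVneq (Ordinal (hj c)) (Ordinal (hj c'))) => E; last exact: hn2.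
  by rewrite /x2 E; case: Hw2 => _ _ irr _ _; rewrite [tadj _ _ _ _ _]irr.
Qed.

(* Conversely, let [f] solve the product.  If for every [i] some colour
   [(i, j)] is served by a copy of a vertex of the first target, these
   vertices solve the first target; otherwise some [i] has all colours [(i, j)]
   served by copies of vertices of the second target, which solve it. *)
Lemma union_MIS_inv : MIS (target G id oc (k1 * k2)) (k1 * k2) ->
  MIS (target G id o1 k1) k1 \/ MIS (target G id o2 k2) k2.
Proof.
move/MIS_target => [_ [f [hc hn]]].
pose g (i : 'I_k1) (j : 'I_k2) := Ordinal (pair_code_lt (ltn_ord i) (ltn_ord j)).
have g_inj i j i' j' : g i j = g i' j' -> i = i' /\ j = j'.
  by move/(congr1 val)/(divmod_inj (ltn_ord j) (ltn_ord j')) => [/val_inj -> /val_inj ->].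
have first_copy i j : odd (tagged (f (g i j))) -> exists x1 : tV G o1,
    [/\ tag (f (g i j)) = tag x1, val (tagged (f (g i j))) = slot1 L (tagged x1) j &
        o_col (o1 (tag x1)) (tagged x1) == Some (val i)].
  case/union_colP: (eqP (hc (g i j)))
    => [[a [j' [i' [EX ha hj' hc' Ec]]]] | [b [? [? [EX _ _ _ _]]]]];
    last by rewrite EX /slot2 /= odd_double.
  case: (divmod_inj (ltn_ord j) hj' Ec) => Ei Ej _.
  exists (existT (fun v => 'I_(o_m (o1 v))) (tag (f (g i j))) (Ordinal ha)).
  by split=> //=; rewrite ?EX ?Ej ?hc' ?Ei.
have second_copy i j : ~~ odd (tagged (f (g i j))) -> exists x2 : tV G o2,
    [/\ tag (f (g i j)) = tag x2, val (tagged (f (g i j))) = slot2 L (tagged x2) i &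
        o_col (o2 (tag x2)) (tagged x2) == Some (val j)].
  case/union_colP: (eqP (hc (g i j)))
    => [[a [? [? [EX _ _ _ _]]]] | [b [i' [j' [EX hb hi' hc' Ec]]]]];
    first by rewrite EX /slot1 /= odd_double.
  case: (divmod_inj (ltn_ord j) (Hc2 hb hc') Ec) => Ei Ej _.
  exists (existT (fun v => 'I_(o_m (o2 v))) (tag (f (g i j))) (Ordinal hb)).
  by split=> //=; rewrite ?EX ?Ei ?hc' ?Ej.
case: (boolP [forall i, [exists j, odd (tagged (f (g i j)))]]) => [/forallP all_first | ].
- left; apply/MIS_target; split=> //.
  have /fin_all_exists [f1 Hf1] i : exists x1 : tV G o1, exists j : 'I_k2,
      [/\ tag (f (g i j)) = tag x1, val (tagged (f (g i j))) = slot1 L (tagged x1) j &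
          o_col (o1 (tag x1)) (tagged x1) == Some (val i)].
    case/existsP: (all_first i) => j /first_copy [x1 hx1]; by exists x1, j.
  exists f1; split; first by move=> i; case: (Hf1 i) => j [].
  move=> i i' hii'; case: (Hf1 i) => j [T1 E1 _]; case: (Hf1 i') => j' [T2 E2 _].
  rewrite -(tadj_slot1 (ltn_ord j) (ltn_ord j') T1 T2 E1 E2); apply: hn.
  by apply: contra hii' => /eqP /g_inj [-> _].
- case/forallPn => i /existsPn all_second; right; apply/MIS_target; split=> //.
  have /fin_all_exists [f2 Hf2] j := second_copy i j (all_second j).
  exists f2; split; first by move=> j; case: (Hf2 j).
  move=> j j' hjj'; case: (Hf2 j) => [T1 E1 _]; case: (Hf2 j') => [T2 E2 _].
  rewrite -(tadj_slot2 (ltn_ord i) (ltn_ord i) T1 T2 E1 E2); apply: hn.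
  by apply: contra hjj' => /eqP /g_inj [_ ->].
Qed.

(* Each node hosts its hub and [2 * (k1 + k2)] slots per vertex it hosts in
   either target. *)
Lemma card_union : #|tV G oc| = #|gV G| + (L * (#|tV G o1| + #|tV G o2|)).*2.
Proof.
rewrite !card_tV (eq_bigr (fun v => 1 + (L * (o_m (o1 v) + o_m (o2 v))).*2)); last first.
  by move=> v _; rewrite union_m add1n mulnC.
rewrite big_split /= sum1_card -big_split /=; congr (_ + _).
rewrite -muln2 big_distrr big_distrl /=.
by apply: eq_bigr => v _; rewrite muln2.
Qed.
End Product.

Lemma union_correct_product s t (G : inst s t) (id : gV G -> nat) (o1 o2 : gV G -> routput)
    kmax1 r1 size1 ans1 kmax2 r2 size2 ans2 :
  wf_inst G -> injective id -> 1 < #|gV G| ->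
  correct_output G id o1 kmax1 r1 size1 ans1 -> correct_output G id o2 kmax2 r2 size2 ans2 ->
  correct_output G id (union_output G id o1 o2) (kmax1 * kmax2) (r1 + r2).+1
    (#|gV G| + ((kmax1 + kmax2) * (size1 + size2)).*2) (ans1 \/ ans2).
Proof.
move=> wfG id_inj n_gt1 [k1 [Hk1 /andP [k1_gt0 k1_le] Hc1 Hv1 [Hw1 Hcard1 HP1]]]
  [k2 [Hk2 /andP [k2_gt0 k2_le] Hc2 Hv2 [Hw2 Hcard2 HP2]]].
exists (k1 * k2); split.
- exact: union_k wfG n_gt1 Hk1 Hk2.
- by rewrite muln_gt0 k1_gt0 k2_gt0 leq_mul.
- exact: union_col_bound wfG n_gt1 Hk1 k1_gt0 Hc1 Hk2 k2_gt0 Hc2.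
- exact: union_valid wfG n_gt1 Hk1 k1_gt0 Hv1 Hk2 k2_gt0 Hv2.
split.
- exact: union_wf wfG id_inj n_gt1 Hk1 Hv1 Hw1 Hk2 Hv2 Hw2.
- by rewrite (card_union id wfG n_gt1 Hk1 Hk2) leq_add2l leq_double leq_mul ?leq_add.
- rewrite HP1 HP2; split; last exact: union_MIS_inv wfG n_gt1 Hk1 k1_gt0 Hk2 k2_gt0 Hc2.
  by case=> [/(union_MIS1 wfG n_gt1 Hk1 k1_gt0 Hw1 Hk2 k2_gt0)
            | /(union_MIS2 wfG n_gt1 Hk1 k1_gt0 Hk2 k2_gt0 Hw2)].
Qed.

Lemma product_size_bound n S1 S2 K : 1 < n ->
  n + (K * (n ^ S1 + n ^ S2)).*2 <= n ^ (S1 + S2 + 4 * K + 2).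
Proof.
move=> n_gt1; set X := n ^ (S1 + S2 + 1).
have le_X e : e <= S1 + S2 + 1 -> n ^ e <= X by move=> he; rewrite leq_pexp2l //; lia.
have hnX : n <= X by rewrite -{1}(expn1 n) le_X //; lia.
have h1X := le_X S1 (leq_trans (leq_addr S2 S1) (leq_addr 1 _)).
have h2X := le_X S2 (leq_trans (leq_addl S1 S2) (leq_addr 1 _)).
have hK : 1 + 4 * K < n ^ (1 + 4 * K) by apply: ltn_expl.
have -> : n ^ (S1 + S2 + 4 * K + 2) = n ^ (1 + 4 * K) * X by rewrite -expnD; congr (n ^ _); lia.
rewrite -muln2; nia.
Qed.

Theorem mainTheorem12 (c s t : nat) (P1 P2 : problem s t) :
  0 < c ->
  local_reduces_to_MIS c P1 -> local_reduces_to_MIS c P2 ->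
  local_reduces_to_MIS c (union_problem P1 P2).
Proof.
move=> _ [fs1 [fr1 [ft1 [fp1 [cs1 cr1 ct1 cp1 [A1 HA1]]]]]]
         [fs2 [fr2 [ft2 [fp2 [cs2 cr2 ct2 cp2 [A2 HA2]]]]]].
exists (fun k => fs1 k + fs2 k + 4 * (fp1 k + fp2 k) + 2), (fun k => fr1 k + fr2 k + 1),
  (fun k => ft1 k + ft2 k), (fun k => fp1 k * fp2 k).
split.
1-4: by repeat (apply: computable_add || apply: computable_mul || apply: computable_const).
exists (par_algo A1 A2 ft1 ft2 comb) => G k id wfG id_inj id_lt o.
pose o1 v := a_out A1 (run A1 G id k (ft1 k) v).
pose o2 v := a_out A2 (run A2 G id k (ft2 k) v).
have H1 : correct_output G id o1 (fp1 k) (fr1 k) (#|gV G| ^ fs1 k) (P1 G k) :=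
  HA1 G k id wfG id_inj id_lt.
have H2 : correct_output G id o2 (fp2 k) (fr2 k) (#|gV G| ^ fs2 k) (P2 G k) :=
  HA2 G k id wfG id_inj id_lt.
have -> : o = union_output G id o1 o2.
  by apply: functional_extensionality => v; exact: out_par_algo.
have [kp1 kp2] : 0 < fp1 k /\ 0 < fp2 k.
  by case: H1 H2 => [? [_ /andP [h1 h1'] _ _ _]] [? [_ /andP [h2 h2'] _ _ _]]; split; lia.
case: (leqP #|gV G| 1) => hn.
- have n1 : #|gV G| = 1 by case: wfG => n0 _ _ _ _; lia.
  rewrite n1 !exp1n in H1 H2 *.
  by apply: (union_correct_alone wfG hn _ _ H1 H2); rewrite muln_gt0 kp1.
- apply: correct_output_weaken (union_correct_product wfG id_inj hn H1 H2) => //.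
  + by rewrite addn1.
  + exact: product_size_bound.
Qed.
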